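(* Let $H$ be a Banach bialgebra and $A$ a left $H$-$\widehat\otimes$-module Arens–Michael algebra. Then the action of $H$ on $A$ is $m$-localizable, i.e., there is a defining family of continuous seminorms $\|\cdot\|$ on $A$ each of which is submultiplicative and $H$-stable.
   Context: Conventions: algebras are complex, associative, unital. $\widehat\otimes$ is the completed projective tensor product. A $\widehat\otimes$-algebra is a complete locally convex algebra with jointly continuous multiplication; a $\widehat\otimes$-bialgebra is a $\widehat\otimes$-algebra $H$ with continuous coassociative comultiplication $\Delta_H\colon H\to H\widehat\otimes H$ and counit $\varepsilon_H\colon H\to\mathbb C$ which are unital algebra homomorphisms; a Banach bialgebra is a $\widehat\otimes$-bialgebra whose underlying space is a Banach space. A left $H$-$\widehat\otimes$-module algebra is a $\widehat\otimes$-algebra $A$ with a continuous bilinear left action $H\times A\to A$ making $A$ a left $H$-module such that $h\cdot(ab)=\mu_A(\Delta_H(h)\cdot(a\otimes b))$ and $h\cdot1=\varepsilon_H(h)1$. An Arens–Michael algebra is a complete locally convex algebra whose topology is given by submultiplicative seminorms. A seminorm $\|\cdot\|$ on $A$ is $H$-stable if there is a continuous seminorm $p$ on $H$ with $\|h\cdot a\|\le p(h)\|a\|$ for all $h\in H$, $a\in A$. *)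

From Stdlib Require Import Reals List.
Open Scope R_scope.

Record Cx := mkC { Cre : R; Cim : R }.
Definition Cadd (a b : Cx) := mkC (Cre a + Cre b) (Cim a + Cim b).
Definition Cmul (a b : Cx) :=
  mkC (Cre a * Cre b - Cim a * Cim b) (Cre a * Cim b + Cim a * Cre b).
Definition C1 := mkC 1 0.
Definition Cmod (a : Cx) := sqrt (Cre a ^ 2 + Cim a ^ 2).

Record LCS := {
  car :> Type;
  vzero : car;
  vadd : car -> car -> car;
  vopp : car -> car;
  vscal : Cx -> car -> car;
  vaddA : forall x y z, vadd x (vadd y z) = vadd (vadd x y) z;
  vaddC : forall x y, vadd x y = vadd y x;
  vadd0 : forall x, vadd vzero x = x;
  vaddN : forall x, vadd (vopp x) x = vzero;
  vscalDr : forall c x y, vscal c (vadd x y) = vadd (vscal c x) (vscal c y);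
  vscalDl : forall c d x, vscal (Cadd c d) x = vadd (vscal c x) (vscal d x);
  vscalA : forall c d x, vscal c (vscal d x) = vscal (Cmul c d) x;
  vscal1 : forall x, vscal C1 x = x;
  idx : Type;
  sn : idx -> car -> R;
  sn_tri : forall i x y, sn i (vadd x y) <= sn i x + sn i y;
  sn_hom : forall i c x, sn i (vscal c x) = Cmod c * sn i x;
  sn_sep : forall x, (forall i, sn i x = 0) -> x = vzero
}.
Arguments vzero E : rename.
Arguments vadd {E} _ _ : rename.
Arguments vopp {E} _ : rename.
Arguments vscal {E} _ _ : rename.
Arguments sn E _ _ : rename.

Definition vsub {E : LCS} (x y : E) : E := vadd x (vopp y).

Definition maxl {I X : Type} (p : I -> X -> R) (L : list I) (x : X) : R :=
  fold_right (fun i m => Rmax (p i x) m) 0 L.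

Definition is_seminorm (E : LCS) (q : E -> R) : Prop :=
  (forall x y, q (vadd x y) <= q x + q y) /\
  (forall c x, q (vscal c x) = Cmod c * q x).

Definition cont_seminorm (E : LCS) (q : E -> R) : Prop :=
  is_seminorm E q /\
  exists (L : list (idx E)) (K : R), forall x, q x <= K * maxl (sn E) L x.

(* a defining family of continuous seminorms: generates the topology of E *)
Definition defining_family (E : LCS) (J : Type) (q : J -> E -> R) : Prop :=
  (forall j, cont_seminorm E (q j)) /\
  (forall i, exists (L : list J) (K : R), forall x, sn E i x <= K * maxl q L x).

Definition complete (E : LCS) : Prop :=
  forall (D : Type) (le : D -> D -> Prop) (x : D -> E),
    inhabited D ->
    (forall a, le a a) ->
    (forall a b c, le a b -> le b c -> le a c) ->
    (forall a b, exists c, le a c /\ le b c) ->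
    (forall i eps, 0 < eps -> exists d0, forall d d',
         le d0 d -> le d0 d' -> sn E i (vsub (x d) (x d')) < eps) ->
    exists l : E, forall i eps, 0 < eps -> exists d0, forall d,
         le d0 d -> sn E i (vsub (x d) l) < eps.

Definition linear {E F : LCS} (f : E -> F) : Prop :=
  (forall x y, f (vadd x y) = vadd (f x) (f y)) /\
  (forall c x, f (vscal c x) = vscal c (f x)).

Definition cont_linear {E F : LCS} (f : E -> F) : Prop :=
  linear f /\
  forall j, exists (L : list (idx E)) (K : R), forall x,
    sn F j (f x) <= K * maxl (sn E) L x.

Definition bilinear {E F G : LCS} (phi : E -> F -> G) : Prop :=
  (forall y, linear (fun x => phi x y)) /\ (forall x, linear (phi x)).

Definition cont_bilinear {E F G : LCS} (phi : E -> F -> G) : Prop :=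
  bilinear phi /\
  forall k, exists (L1 : list (idx E)) (L2 : list (idx F)) (K : R),
    forall x y, sn G k (phi x y) <= K * maxl (sn E) L1 x * maxl (sn F) L2 y.

(* T with t : E x F -> T is a completed projective tensor product E (^x) F:
   T complete, t jointly continuous bilinear, and every jointly continuous
   bilinear map into a complete LCS factors uniquely through a continuous
   linear map on T. *)
Definition is_ptensor (E F T : LCS) (t : E -> F -> T) : Prop :=
  complete T /\ cont_bilinear t /\
  forall (G : LCS) (phi : E -> F -> G), complete G -> cont_bilinear phi ->
    (exists psi : T -> G, cont_linear psi /\ forall x y, psi (t x y) = phi x y) /\
    (forall psi1 psi2 : T -> G, cont_linear psi1 -> cont_linear psi2 ->
       (forall x y, psi1 (t x y) = phi x y) ->
       (forall x y, psi2 (t x y) = phi x y) -> forall z, psi1 z = psi2 z).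

Record LCAlg := {
  alcs :> LCS;
  amul : alcs -> alcs -> alcs;
  aone : alcs;
  amulA : forall x y z, amul x (amul y z) = amul (amul x y) z;
  amul1l : forall x, amul aone x = x;
  amul1r : forall x, amul x aone = x;
  amul_cbil : cont_bilinear amul;
  acomplete : complete alcs
}.
Arguments amul {l} _ _ : rename.
Arguments aone l : rename.

Definition submult (A : LCAlg) (q : A -> R) : Prop :=
  forall x y, q (amul x y) <= q x * q y.

Definition ArensMichael (A : LCAlg) : Prop :=
  exists (J : Type) (q : J -> A -> R),
    defining_family A J q /\ forall j, submult A (q j).

Record BBialg := {
  bH :> LCAlg;
  (* underlying space is Banach: topology given by a single norm *)
  bnorm : bH -> R;
  bnorm_def : defining_family bH unit (fun _ => bnorm);
  bnorm_sep : forall x, bnorm x = 0 -> x = vzero bH;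
  (* H (^x) H, an (^x)-algebra with (x(x)y)(x'(x)y') = xx'(x)yy' *)
  bHH : LCAlg;
  btens : bH -> bH -> bHH;
  btens_pt : is_ptensor bH bH bHH btens;
  btens_mul : forall x y x' y',
      amul (btens x y) (btens x' y') = btens (amul x x') (amul y y');
  bHHH : LCS;
  btens3 : bHH -> bH -> bHHH;
  btens3_pt : is_ptensor bHH bH bHHH btens3;
  Delta : bH -> bHH;
  Delta_cl : cont_linear Delta;
  Delta_mul : forall x y, Delta (amul x y) = amul (Delta x) (Delta y);
  Delta_one : Delta (aone bH) = aone bHH;
  beps : bH -> Cx;
  beps_add : forall x y, beps (vadd x y) = Cadd (beps x) (beps y);
  beps_scal : forall c x, beps (vscal c x) = Cmul c (beps x);
  beps_cont : exists (L : list (idx bH)) (K : R), forall x,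
      Cmod (beps x) <= K * maxl (sn bH) L x;
  beps_mul : forall x y, beps (amul x y) = Cmul (beps x) (beps y);
  beps_one : beps (aone bH) = C1;
  (* coassociativity (Delta (x) id) Delta = (id (x) Delta) Delta, with
     H(^x)(H(^x)H) identified with (H(^x)H)(^x)H; iota x is u(x)v |-> (x(x)u)(x)v *)
  coassoc : forall (Lm Rm : bHH -> bHHH) (iota : bH -> bHH -> bHHH),
      cont_linear Lm -> cont_linear Rm -> (forall x, cont_linear (iota x)) ->
      (forall x y, Lm (btens x y) = btens3 (Delta x) y) ->
      (forall x u v, iota x (btens u v) = btens3 (btens x u) v) ->
      (forall x y, Rm (btens x y) = iota x (Delta y)) ->
      forall h, Lm (Delta h) = Rm (Delta h);
  (* counit laws (eps (x) id) Delta = id = (id (x) eps) Delta *)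
  counit_l : forall E : bHH -> bH, cont_linear E ->
      (forall x y, E (btens x y) = vscal (beps x) y) ->
      forall h, E (Delta h) = h;
  counit_r : forall E : bHH -> bH, cont_linear E ->
      (forall x y, E (btens x y) = vscal (beps y) x) ->
      forall h, E (Delta h) = h
}.

Record HModAlg (H : BBialg) := {
  mA :> LCAlg;
  act : H -> mA -> mA;
  act_cbil : cont_bilinear act;
  act_mul : forall h k a, act (amul h k) a = act h (act k a);
  act_1 : forall a, act (aone H) a = a;
  (* h.(ab) = mu_A(Delta(h).(a (x) b)); Phi_{a,b} is the continuous linear
     map H(^x)H -> A, x(x)y |-> (x.a)(y.b) *)
  act_amul : forall (a b : mA) (Phi : bHH H -> mA), cont_linear Phi ->
      (forall x y, Phi (btens H x y) = amul (act x a) (act y b)) ->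
      forall h, act h (amul a b) = Phi (Delta H h);
  act_aone : forall h, act h (aone mA) = vscal (beps H h) (aone mA)
}.
Arguments act {H} _ _ _.

Definition H_stable (H : BBialg) (A : HModAlg H) (q : A -> R) : Prop :=
  exists p : H -> R, cont_seminorm H p /\
    forall h a, q (act A h a) <= p h * q a.

From Pilot Require Import Defs.
From Stdlib Require Import Reals List Lra Psatz ClassicalEpsilon FunctionalExtensionality ProofIrrelevance.
Open Scope R_scope.

(* Let q be a continuous submultiplicative seminorm on A and let
   q'(a) = sup { q(h.a) : |h| <= 1 }.  Since H is a Banach algebra, q' is a
   continuous seminorm with q <= |1| q' and q'(k.a) <= C |k| q'(a), i.e. q' is
   H-stable.  The key point is that q' is submultiplicative up to a constant:
   the bilinear map (x, y) |-> ((x.a)(y.b))_(a,b), with (a, b) ranging over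
   pairs in the q'-unit ball, takes values in the complete space of q-bounded
   families; by the universal property of H (^x) H it factors through a
   continuous linear map Psi, and h.(ab) = Psi(Delta h)_(a,b) is then bounded
   by a constant times |h|.  Hence D q' is submultiplicative and H-stable for
   a suitable D, and these seminorms dominate the given defining family. *)

Definition Cr (r : R) : Cx := mkC r 0.

Lemma Cmod_r (r : R) : Cmod (Cr r) = Rabs r.
Proof. unfold Cmod, Cr; simpl. rewrite <- sqrt_Rsqr_abs. f_equal. unfold Rsqr; ring. Qed.

Lemma Cmod_ge0 (c : Cx) : 0 <= Cmod c.
Proof. unfold Cmod; apply sqrt_pos. Qed.

Lemma Cmul_r (r s : R) : Cmul (Cr r) (Cr s) = Cr (r * s).
Proof. unfold Cmul, Cr; simpl; f_equal; ring. Qed.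

Lemma Cadd_r (r s : R) : Cadd (Cr r) (Cr s) = Cr (r + s).
Proof. unfold Cadd, Cr; simpl; f_equal; ring. Qed.

Lemma C1_r : Defs.C1 = Cr 1.
Proof. reflexivity. Qed.

Lemma vadd0r (E : LCS) (x : E) : vadd x (vzero E) = x.
Proof. rewrite vaddC; apply vadd0. Qed.

Lemma vaddNr (E : LCS) (x : E) : vadd x (vopp x) = vzero E.
Proof. rewrite vaddC; apply vaddN. Qed.

Lemma vadd_cancel (E : LCS) (x y z : E) : vadd x y = vadd x z -> y = z.
Proof.
  intro Hxyz.
  rewrite <- (vadd0 E y), <- (vadd0 E z), <- (vaddN E x), <- !vaddA, Hxyz; auto.
Qed.

Lemma vscal0 (E : LCS) (x : E) : vscal (Cr 0) x = vzero E.
Proof.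
  apply (vadd_cancel E (vscal (Cr 0) x)).
  rewrite vadd0r, <- vscalDl, Cadd_r, Rplus_0_r; auto.
Qed.

Lemma vscalN1 (E : LCS) (x : E) : vscal (Cr (-1)) x = vopp x.
Proof.
  apply (vadd_cancel E x). rewrite vaddNr. rewrite <- (vscal1 E x) at 1.
  rewrite C1_r, <- vscalDl, Cadd_r. replace (1 + -1) with 0 by ring. apply vscal0.
Qed.

Lemma vsub_chain (E : LCS) (x y z : E) : vadd (vsub x y) (vsub y z) = vsub x z.
Proof. unfold vsub. rewrite vaddA. f_equal. rewrite <- vaddA, vaddN, vadd0r. auto. Qed.

Lemma vsub_opp (E : LCS) (x y : E) : vopp (vsub x y) = vsub y x.
Proof.
  unfold vsub. apply (vadd_cancel E (vadd x (vopp y))). rewrite vaddNr.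
  rewrite vaddA, <- (vaddA E x), vaddN, vadd0r, vaddNr. auto.
Qed.

Lemma linear0 {E F : LCS} (f : E -> F) : Defs.linear f -> f (vzero E) = vzero F.
Proof.
  intros [Hadd _]. apply (vadd_cancel F (f (vzero E))). rewrite <- Hadd, !vadd0r. auto.
Qed.

Section Seminorms.
Variables (E : LCS) (q : E -> R).
Hypothesis q_semi : is_seminorm E q.

Lemma semi0 : q (vzero E) = 0.
Proof.
  destruct q_semi as [_ Hhom].
  rewrite <- (vscal0 E (vzero E)), Hhom, Cmod_r, Rabs_R0; ring.
Qed.

Lemma semiN (x : E) : q (vopp x) = q x.
Proof.
  destruct q_semi as [_ Hhom].
  rewrite <- vscalN1, Hhom, Cmod_r. rewrite Rabs_left by lra. ring.
Qed.

Lemma semi_ge0 (x : E) : 0 <= q x.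
Proof.
  pose proof (proj1 q_semi x (vopp x)) as Htri.
  rewrite vaddNr, semi0, semiN in Htri. lra.
Qed.

Lemma semi_sub_tri (x y z : E) : q (vsub x z) <= q (vsub x y) + q (vsub y z).
Proof. rewrite <- (vsub_chain E x y z). apply q_semi. Qed.

Lemma semi_subC (x y : E) : q (vsub x y) = q (vsub y x).
Proof. rewrite <- vsub_opp, semiN; auto. Qed.

Lemma semi_real_scal (r : R) (x : E) : q (vscal (Cr r) x) = Rabs r * q x.
Proof. rewrite (proj2 q_semi), Cmod_r; auto. Qed.

End Seminorms.

Lemma scale_semi (E : LCS) (p : E -> R) (D : R) :
  0 <= D -> is_seminorm E p -> is_seminorm E (fun x => D * p x).
Proof.
  intros HD [Htri Hhom]. split.
  - intros x y. rewrite <- Rmult_plus_distr_l. apply Rmult_le_compat_l; auto.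
  - intros c x. rewrite Hhom. ring.
Qed.

Lemma scale_cont_seminorm (E : LCS) (p : E -> R) (D : R) :
  0 <= D -> cont_seminorm E p -> cont_seminorm E (fun x => D * p x).
Proof.
  intros HD [Hp [L [K HK]]]. split; [apply scale_semi; auto|].
  exists L, (D * K). intros x. rewrite Rmult_assoc. apply Rmult_le_compat_l; auto.
Qed.

Lemma maxl_ge0 {I X} (p : I -> X -> R) L x : 0 <= maxl p L x.
Proof. induction L; simpl; [lra|]. eapply Rle_trans; [exact IHL|apply Rmax_r]. Qed.

Lemma maxl_in {I X} (p : I -> X -> R) L x i : In i L -> p i x <= maxl p L x.
Proof.
  induction L; simpl; [tauto|]. intros [->|Hi]; [apply Rmax_l|].
  eapply Rle_trans; [apply IHL; auto|apply Rmax_r].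
Qed.

Lemma maxl_lub {I X} (p : I -> X -> R) L x M :
  0 <= M -> (forall i, In i L -> p i x <= M) -> maxl p L x <= M.
Proof.
  intros HM Hbound. induction L; simpl; auto. apply Rmax_lub; [apply Hbound; simpl; auto|].
  apply IHL; intros; apply Hbound; simpl; auto.
Qed.

Lemma maxl_appl {I X} (p : I -> X -> R) L L' x : maxl p L x <= maxl p (L ++ L') x.
Proof. apply maxl_lub; [apply maxl_ge0|]. intros; apply maxl_in, in_or_app; auto. Qed.

Lemma maxl_appr {I X} (p : I -> X -> R) L L' x : maxl p L' x <= maxl p (L ++ L') x.
Proof. apply maxl_lub; [apply maxl_ge0|]. intros; apply maxl_in, in_or_app; auto. Qed.

Lemma maxl_mono {I X} (p p' : I -> X -> R) L x :
  (forall i, p i x <= p' i x) -> maxl p L x <= maxl p' L x.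
Proof.
  intros Hle. apply maxl_lub; [apply maxl_ge0|].
  intros i Hi. eapply Rle_trans; [apply Hle|apply maxl_in; auto].
Qed.

Lemma abs_bound (K m : R) : 0 <= m -> K * m <= Rabs K * m.
Proof. intros; apply Rmult_le_compat_r; [auto|apply RRle_abs]. Qed.

Lemma list_bound {I J X} (f : I -> X -> R) (g : list J -> X -> R) :
  (forall L x, 0 <= g L x) ->
  (forall L L' x, g L x <= g (L ++ L') x) ->
  (forall L L' x, g L' x <= g (L ++ L') x) ->
  (forall i, exists L K, forall x, f i x <= K * g L x) ->
  forall L0, exists L K, 0 <= K /\ forall x, maxl f L0 x <= K * g L x.
Proof.
  intros g0 gl gr Hf L0. induction L0 as [|i L0 IH].
  - exists nil, 0. split; [lra|]. intros; simpl. rewrite Rmult_0_l; lra.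
  - destruct IH as [L1 [K1 [K1p H1]]]. destruct (Hf i) as [L2 [K2 H2]].
    exists (L1 ++ L2), (K1 + Rabs K2). split; [pose proof (Rabs_pos K2); lra|].
    intros x. simpl.
    pose proof (gl L1 L2 x). pose proof (gr L1 L2 x). pose proof (g0 (L1 ++ L2) x).
    pose proof (g0 L1 x). pose proof (g0 L2 x). pose proof (Rabs_pos K2).
    apply Rmax_lub.
    + eapply Rle_trans; [apply H2|]. pose proof (abs_bound K2 (g L2 x) ltac:(auto)). nra.
    + eapply Rle_trans; [apply H1|]. nra.
Qed.

Lemma maxl_bound_uniform {I X} (f : I -> X -> R) (g : X -> R) :
  (forall x, 0 <= g x) -> (forall i, exists K, forall x, f i x <= K * g x) ->
  forall L, exists K, 0 <= K /\ forall x, maxl f L x <= K * g x.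
Proof.
  intros g0 Hf L.
  destruct (list_bound f (fun (_ : list unit) x => g x)) with (L0 := L)
    as [_ [K HK]].
  - auto.
  - intros; lra.
  - intros; lra.
  - intros i. destruct (Hf i) as [K HK]. exists nil, K. auto.
  - exists K. auto.
Qed.

(* Suprema of real functions bounded above; the supremum of the empty family
   (and the lower bound of every supremum) is 0. *)
Definition supf {T} (g : T -> R) : R :=
  epsilon (inhabits 0) (fun m => is_lub (fun r => r = 0 \/ exists t, r = g t) m).

Lemma supf_spec {T} (g : T -> R) M :
  (forall t, g t <= M) -> is_lub (fun r => r = 0 \/ exists t, r = g t) (supf g).
Proof.
  intros HM. unfold supf. apply epsilon_spec.
  destruct (completeness (fun r => r = 0 \/ exists t, r = g t)) as [m Hm].
  - exists (Rmax M 0). intros r [->|[t ->]]; [apply Rmax_r|].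
    eapply Rle_trans; [apply HM|apply Rmax_l].
  - exists 0; left; auto.
  - exists m; auto.
Qed.

Lemma supf_ge {T} (g : T -> R) M t : (forall t, g t <= M) -> g t <= supf g.
Proof. intros HM. apply (proj1 (supf_spec g M HM)). right; exists t; auto. Qed.

Lemma supf_ge0 {T} (g : T -> R) M : (forall t, g t <= M) -> 0 <= supf g.
Proof. intros HM. apply (proj1 (supf_spec g M HM)). left; auto. Qed.

Lemma supf_le {T} (g : T -> R) M : 0 <= M -> (forall t, g t <= M) -> supf g <= M.
Proof. intros HM0 HM. apply (proj2 (supf_spec g M HM)). intros r [->|[t ->]]; auto. Qed.

Lemma supf_scale {T} (g : T -> R) c M : 0 <= c -> (forall t, g t <= M) ->
  supf (fun t => c * g t) = c * supf g.
Proof.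
  intros Hc HM. pose proof (supf_ge0 g M HM) as Hsup0.
  assert (Hcg : forall t, c * g t <= c * M) by (intros; apply Rmult_le_compat_l; auto).
  apply Rle_antisym.
  - apply supf_le; [apply Rmult_le_pos; auto|].
    intros t; apply Rmult_le_compat_l; auto. apply (supf_ge _ M); auto.
  - destruct (Req_dec c 0) as [->|Hc0].
    + rewrite Rmult_0_l. apply (supf_ge0 _ (0 * M)); auto.
    + assert (Hle : supf g <= supf (fun t => c * g t) / c).
      { apply supf_le.
        { apply Rmult_le_pos; [apply (supf_ge0 _ _ Hcg)|].
          apply Rlt_le, Rinv_0_lt_compat; lra. }
        intros t. pose proof (supf_ge _ _ t Hcg) as Ht. simpl in Ht.
        apply (Rmult_le_reg_l c); [lra|]. field_simplify; [|lra]. lra. }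
      apply (Rmult_le_compat_l c) in Hle; [|auto]. field_simplify in Hle; lra.
Qed.

Lemma le_of_le_eps (x e : R) : (forall eps, 0 < eps -> x <= e + eps) -> x <= e.
Proof.
  intros Hle. destruct (Rle_dec x e) as [|Hn]; auto. exfalso.
  specialize (Hle ((x - e) / 2) ltac:(lra)). lra.
Qed.

Definition eventually {D : Type} (le : D -> D -> Prop) (P : D -> Prop) : Prop :=
  exists d0, forall d, le d0 d -> P d.

Section Nets.
Variables (D : Type) (le : D -> D -> Prop).
Hypothesis D_inh : inhabited D.
Hypothesis le_trans : forall a b c, le a b -> le b c -> le a c.
Hypothesis le_dir : forall a b, exists c, le a c /\ le b c.

Lemma eventually_list {I : Type} (P : I -> D -> Prop) (L : list I) :
  (forall i, eventually le (P i)) ->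
  eventually le (fun d => forall i, In i L -> P i d).
Proof.
  destruct D_inh as [d00]. intros HP. induction L as [|i L IH].
  - exists d00. intros d _ i [].
  - destruct IH as [d1 H1]. destruct (HP i) as [d2 H2].
    destruct (le_dir d1 d2) as [c [Hc1 Hc2]].
    exists c. intros d Hd j [<-|Hj]; [apply H2; eauto|apply H1; eauto].
Qed.

Lemma eventually_cont_seminorm (E : LCS) (q : E -> R) (x : D -> E) (l : E) :
  (exists L K, forall z, q z <= K * maxl (sn E) L z) ->
  (forall i eps, 0 < eps -> eventually le (fun d => sn E i (vsub (x d) l) < eps)) ->
  forall eps, 0 < eps -> eventually le (fun d => q (vsub (x d) l) < eps).
Proof.
  intros [L [K HK]] Hconv eps Heps.
  set (K' := Rabs K + 1). assert (HK' : 0 < K') by (pose proof (Rabs_pos K); unfold K'; lra).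
  destruct (eventually_list (fun i d => sn E i (vsub (x d) l) < eps / K') L) as [d0 Hd0].
  { intros i. apply Hconv, Rdiv_lt_0_compat; auto. }
  exists d0. intros d Hd. set (z := vsub (x d) l).
  assert (Hmax : maxl (sn E) L z <= eps / K').
  { apply maxl_lub; [apply Rlt_le, Rdiv_lt_0_compat; auto|].
    intros i Hi. apply Rlt_le, Hd0; auto. }
  pose proof (maxl_ge0 (sn E) L z). pose proof (Rabs_pos K).
  eapply Rle_lt_trans; [apply HK|]. eapply Rle_lt_trans; [apply abs_bound, maxl_ge0|].
  apply Rle_lt_trans with (Rabs K * (eps / K')); [apply Rmult_le_compat_l; auto|].
  unfold K'. apply (Rmult_lt_reg_r (Rabs K + 1)); [lra|]. field_simplify; lra.
Qed.

Lemma cauchy_estimate_limit (E : LCS) (q : E -> R) (x : D -> E) (l : E) (d0 : D) (e : R) :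
  is_seminorm E q ->
  (forall eps, 0 < eps -> eventually le (fun d => q (vsub (x d) l) < eps)) ->
  (forall d d', le d0 d -> le d0 d' -> q (vsub (x d) (x d')) <= e) ->
  forall d, le d0 d -> q (vsub (x d) l) <= e.
Proof.
  intros Hq Hconv Hcauchy d Hd. apply le_of_le_eps. intros eps Heps.
  destruct (Hconv eps Heps) as [d1 Hd1]. destruct (le_dir d d1) as [c [Hc1 Hc2]].
  eapply Rle_trans; [apply (semi_sub_tri E q Hq _ (x c))|].
  pose proof (Hcauchy d c Hd (le_trans _ _ _ Hd Hc1)). pose proof (Hd1 c Hc2). lra.
Qed.

End Nets.

(* The space of q-bounded families (f_s)_(s : S) in A, with the topology of
   pointwise convergence for the seminorms of A together with uniform
   convergence for q. *)
Section BoundedFamilies.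
Variables (A : LCS) (q : A -> R) (S : Type).
Hypothesis q_semi : is_seminorm A q.

Definition bounded_family (f : S -> A) : Prop := exists M, forall s, q (f s) <= M.

Definition bfam : Type := {f : S -> A | bounded_family f}.

Lemma bfam_eq (f g : bfam) : (forall s, proj1_sig f s = proj1_sig g s) -> f = g.
Proof.
  destruct f as [f pf], g as [g pg]; simpl. intros Hfg.
  assert (f = g) by (apply functional_extensionality; auto). subst g.
  f_equal. apply proof_irrelevance.
Qed.

Lemma bounded_zero : bounded_family (fun _ => vzero A).
Proof. exists 0; intros; rewrite semi0; auto; lra. Qed.

Lemma bounded_add (f g : S -> A) :
  bounded_family f -> bounded_family g -> bounded_family (fun s => vadd (f s) (g s)).
Proof.
  intros [M1 H1] [M2 H2]. exists (M1 + M2). intros s.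
  eapply Rle_trans; [apply q_semi|]. specialize (H1 s); specialize (H2 s); lra.
Qed.

Lemma bounded_opp (f : S -> A) : bounded_family f -> bounded_family (fun s => vopp (f s)).
Proof. intros [M HM]. exists M. intros s. rewrite semiN; auto. Qed.

Lemma bounded_scal c (f : S -> A) : bounded_family f -> bounded_family (fun s => vscal c (f s)).
Proof.
  intros [M HM]. exists (Cmod c * M). intros s. rewrite (proj2 q_semi).
  apply Rmult_le_compat_l; [apply Cmod_ge0|auto].
Qed.

Definition bfam_sn (j : option (Defs.idx A * S)) (f : bfam) : R :=
  match j with
  | None => supf (fun s => q (proj1_sig f s))
  | Some (i, s) => sn A i (proj1_sig f s)
  end.

Lemma bfam_sup_ge (f : bfam) s : q (proj1_sig f s) <= bfam_sn None f.
Proof. destruct f as [f [M HM]]. apply (supf_ge (fun s => q (f s)) M s HM). Qed.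

Lemma bfam_sup_ge0 (f : bfam) : 0 <= bfam_sn None f.
Proof. destruct f as [f [M HM]]. apply (supf_ge0 (fun s => q (f s)) M HM). Qed.

Definition Bfam : LCS.
Proof.
  refine {| car := bfam;
            vzero := exist _ (fun _ => vzero A) bounded_zero;
            vadd := fun f g => exist _ (fun s => vadd (proj1_sig f s) (proj1_sig g s))
                                 (bounded_add _ _ (proj2_sig f) (proj2_sig g));
            vopp := fun f => exist _ (fun s => vopp (proj1_sig f s))
                               (bounded_opp _ (proj2_sig f));
            vscal := fun c f => exist _ (fun s => vscal c (proj1_sig f s))
                                  (bounded_scal c _ (proj2_sig f));
            idx := option (Defs.idx A * S); sn := bfam_sn |}.
  - intros; apply bfam_eq; intros; simpl; apply vaddA.
  - intros; apply bfam_eq; intros; simpl; apply vaddC.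
  - intros; apply bfam_eq; intros; simpl; apply vadd0.
  - intros; apply bfam_eq; intros; simpl; apply vaddN.
  - intros; apply bfam_eq; intros; simpl; apply vscalDr.
  - intros; apply bfam_eq; intros; simpl; apply vscalDl.
  - intros; apply bfam_eq; intros; simpl; apply vscalA.
  - intros; apply bfam_eq; intros; simpl; apply vscal1.
  - intros [[i s]|] f g; simpl; [apply sn_tri|].
    pose proof (bfam_sup_ge0 f); pose proof (bfam_sup_ge0 g).
    apply supf_le; [simpl in *; lra|]. intros s.
    eapply Rle_trans; [apply q_semi|].
    pose proof (bfam_sup_ge f s); pose proof (bfam_sup_ge g s); simpl in *; lra.
  - intros [[i s]|] c [f [M HM]]; simpl; [apply sn_hom|].
    rewrite <- (supf_scale _ _ M); [|apply Cmod_ge0|auto].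
    f_equal. apply functional_extensionality; intros s. apply q_semi.
  - intros f Hf. apply bfam_eq; intros s; simpl. apply sn_sep.
    intros i. apply (Hf (Some (i, s))).
Defined.

(* A Cauchy net of bounded families converges pointwise (by completeness of
   A); the uniform Cauchy estimate passes to the pointwise limit, which is
   therefore bounded and is the limit in Bfam. *)
Lemma Bfam_complete :
  Defs.complete A -> (exists L K, forall x, q x <= K * maxl (sn A) L x) ->
  Defs.complete Bfam.
Proof.
  intros HA Hq_cont D le x Dinh Hrefl Htr Hdir Hcauchy.
  set (f := fun d s => proj1_sig (x d) s).
  set (is_lim := fun s (l : A) => forall i eps, 0 < eps ->
                   eventually le (fun d => sn A i (vsub (f d s) l) < eps)).
  set (l := fun s => epsilon (inhabits (vzero A)) (is_lim s)).
  assert (Hl : forall s, is_lim s (l s)).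
  { intros s. apply epsilon_spec, (HA D le (fun d => f d s) Dinh Hrefl Htr Hdir).
    intros i eps Heps. destruct (Hcauchy (Some (i, s)) eps Heps) as [d0 Hd0].
    exists d0. intros d d' H1 H2. apply (Hd0 d d' H1 H2). }
  assert (Hunif : forall eps, 0 < eps -> exists d0, forall d d', le d0 d -> le d0 d' ->
                   forall s, q (vsub (f d s) (f d' s)) <= eps).
  { intros eps Heps. destruct (Hcauchy None eps Heps) as [d0 Hd0].
    exists d0. intros d d' H1 H2 s.
    eapply Rle_trans; [apply (bfam_sup_ge (vsub (x d) (x d')) s)|].
    apply Rlt_le, Hd0; auto. }
  assert (Hlimit : forall eps d0, (forall d d', le d0 d -> le d0 d' ->
                   forall s, q (vsub (f d s) (f d' s)) <= eps) ->
                   forall d, le d0 d -> forall s, q (vsub (f d s) (l s)) <= eps).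
  { intros eps d0 Hd0 d Hd s.
    apply (cauchy_estimate_limit D le Htr Hdir A q (fun d => f d s) (l s) d0); auto.
    apply (eventually_cont_seminorm D le Dinh Htr Hdir); auto. apply Hl. }
  assert (Hbounded : bounded_family l).
  { destruct (Hunif 1 Rlt_0_1) as [d0 Hd0]. destruct (proj2_sig (x d0)) as [M HM].
    exists (1 + M). intros s.
    assert (Hdecomp : l s = vadd (vsub (l s) (f d0 s)) (f d0 s)).
    { unfold vsub. rewrite <- vaddA, vaddN, vadd0r. auto. }
    rewrite Hdecomp. eapply Rle_trans; [apply q_semi|]. rewrite semi_subC by auto.
    pose proof (Hlimit 1 d0 Hd0 d0 (Hrefl d0) s). pose proof (HM s). unfold f in *. lra. }
  exists (exist _ l Hbounded : Bfam).
  intros [[i s]|] eps Heps.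
  - apply (Hl s i eps Heps).
  - destruct (Hunif (eps / 2) ltac:(lra)) as [d0 Hd0]. exists d0. intros d Hd.
    simpl. apply Rle_lt_trans with (eps / 2); [|lra].
    apply supf_le; [lra|]. intros s. apply (Hlimit _ d0 Hd0 d Hd s).
Qed.

End BoundedFamilies.

Lemma le_mul_of_gt (X M alpha beta : R) : 0 <= alpha -> 0 <= beta -> 0 <= M ->
  (forall t s, alpha < t -> beta < s -> X <= M * t * s) -> X <= M * alpha * beta.
Proof.
  intros Ha Hb HM Hgt. apply le_of_le_eps. intros eps Heps.
  set (P := M * (alpha + beta + 1) + 1). assert (HP : 0 < P) by (unfold P; nra).
  set (e := Rmin 1 (eps / P)).
  assert (He0 : 0 < e) by (apply Rmin_pos; [lra|apply Rdiv_lt_0_compat; auto]).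
  assert (He1 : e <= 1) by apply Rmin_l.
  assert (HeP : e * P <= eps).
  { assert (Hle : e <= eps / P) by apply Rmin_r.
    apply (Rmult_le_compat_r P) in Hle; [|lra].
    unfold Rdiv in Hle. rewrite Rmult_assoc, Rinv_l in Hle by lra. lra. }
  specialize (Hgt (alpha + e) (beta + e) ltac:(lra) ltac:(lra)).
  assert (M * e * e <= M * e * 1) by (apply Rmult_le_compat_l; nra).
  assert (M * (alpha + e) * (beta + e) <= M * alpha * beta + e * P) by (unfold P; nra).
  lra.
Qed.

Lemma unit_ball_bound (E : LCS) (p : E -> R) (Q : E -> E -> R) (K : R) :
  is_seminorm E p -> 0 <= K ->
  (forall r s a b, 0 < r -> 0 < s ->
     Q (vscal (Cr r) a) (vscal (Cr s) b) = r * s * Q a b) ->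
  (forall a b, p a <= 1 -> p b <= 1 -> Q a b <= K) ->
  forall a b, Q a b <= K * p a * p b.
Proof.
  intros Hp HK Hhom Hball a b.
  apply le_mul_of_gt; auto using semi_ge0. intros t s Ht Hs.
  assert (Ht0 : 0 < t) by (pose proof (semi_ge0 E p Hp a); lra).
  assert (Hs0 : 0 < s) by (pose proof (semi_ge0 E p Hp b); lra).
  assert (Hnormalized : forall c x, 0 < c -> p x < c -> p (vscal (Cr (/ c)) x) <= 1).
  { intros c x Hc Hx. rewrite (semi_real_scal E p Hp), Rabs_pos_eq
      by (apply Rlt_le, Rinv_0_lt_compat; lra).
    apply (Rmult_le_reg_l c); [lra|]. rewrite <- Rmult_assoc, Rinv_r by lra. lra. }
  pose proof (Hball _ _ (Hnormalized t a Ht0 Ht) (Hnormalized s b Hs0 Hs)) as Hle.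
  rewrite Hhom in Hle by (apply Rinv_0_lt_compat; lra).
  apply (Rmult_le_compat_l (t * s)) in Hle; [|nra].
  replace (t * s * (/ t * / s * Q a b)) with (Q a b) in Hle by (field; lra).
  lra.
Qed.

Lemma amul_linl (A : LCAlg) (y : A) : Defs.linear (fun x : A => amul x y).
Proof. exact (proj1 (proj1 (amul_cbil A)) y). Qed.

Lemma amul_linr (A : LCAlg) (x : A) : Defs.linear (amul x).
Proof. exact (proj2 (proj1 (amul_cbil A)) x). Qed.

Lemma bilinear_estimate (K a b c1 c2 x y : R) : 0 <= a -> 0 <= b -> 0 <= c1 -> 0 <= c2 ->
  a <= c1 * x -> b <= c2 * y -> K * a * b <= (Rabs K * c1 * c2) * (x * y).
Proof.
  intros Ha Hb Hc1 Hc2 H1 H2. pose proof (Rabs_pos K).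
  apply Rle_trans with (Rabs K * a * b).
  { rewrite !Rmult_assoc. apply Rmult_le_compat_r; [nra|apply RRle_abs]. }
  replace (Rabs K * c1 * c2 * (x * y)) with (Rabs K * ((c1 * x) * (c2 * y))) by ring.
  rewrite Rmult_assoc. apply Rmult_le_compat_l; auto. apply Rmult_le_compat; auto.
Qed.

Section BanachBialgebra.
Variable H : BBialg.

Lemma bnorm_semi : is_seminorm H (bnorm H).
Proof. exact (proj1 (proj1 (bnorm_def H) tt)). Qed.

Lemma bnorm_ge0 (h : H) : 0 <= bnorm H h.
Proof. apply (semi_ge0 H), bnorm_semi. Qed.

Lemma bnorm_cont : exists L K, 0 <= K /\ forall h, bnorm H h <= K * maxl (sn H) L h.
Proof.
  destruct (proj2 (proj1 (bnorm_def H) tt)) as [L [K HK]].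
  exists L, (Rabs K). split; [apply Rabs_pos|].
  intros h. eapply Rle_trans; [apply HK|apply abs_bound, maxl_ge0].
Qed.

Lemma sn_le_bnorm (L : list (Defs.idx H)) :
  exists K, 0 <= K /\ forall h, maxl (sn H) L h <= K * bnorm H h.
Proof.
  apply maxl_bound_uniform; [apply bnorm_ge0|]. intros i.
  destruct (proj2 (bnorm_def H) i) as [L' [K HK]]. exists (Rabs K). intros h.
  eapply Rle_trans; [apply HK|]. eapply Rle_trans; [apply abs_bound, maxl_ge0|].
  apply Rmult_le_compat_l; [apply Rabs_pos|].
  apply maxl_lub; [apply bnorm_ge0|]. intros; lra.
Qed.

Lemma bnorm_mul : exists C, 0 <= C /\
  forall h k, bnorm H (amul h k) <= C * bnorm H h * bnorm H k.
Proof.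
  destruct bnorm_cont as [L [Kb [HKb HbL]]].
  destruct (maxl_bound_uniform (fun i (p : H * H) => sn H i (amul (fst p) (snd p)))
              (fun p => bnorm H (fst p) * bnorm H (snd p))) with (L := L) as [K [HK0 HK]].
  - intros; apply Rmult_le_pos; apply bnorm_ge0.
  - intros i. destruct (proj2 (amul_cbil H) i) as [L1 [L2 [K HK]]].
    destruct (sn_le_bnorm L1) as [c1 [Hc1 H1]]. destruct (sn_le_bnorm L2) as [c2 [Hc2 H2]].
    exists (Rabs K * c1 * c2). intros [h k]; simpl.
    eapply Rle_trans; [apply HK|]. apply bilinear_estimate; auto; apply maxl_ge0.
  - exists (Kb * K). split; [nra|]. intros h k. eapply Rle_trans; [apply HbL|].
    specialize (HK (h, k)). simpl in HK. rewrite !Rmult_assoc. apply Rmult_le_compat_l; auto.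
Qed.

Lemma Delta_bounded (L : list (Defs.idx (bHH H))) :
  exists K, 0 <= K /\ forall h, maxl (sn (bHH H)) L (Defs.Delta H h) <= K * bnorm H h.
Proof.
  apply maxl_bound_uniform; [apply bnorm_ge0|]. intros i.
  destruct (proj2 (Delta_cl H) i) as [L' [K HK]]. destruct (sn_le_bnorm L') as [c [Hc Hc']].
  exists (Rabs K * c). intros h. eapply Rle_trans; [apply HK|].
  eapply Rle_trans; [apply abs_bound, maxl_ge0|]. rewrite Rmult_assoc.
  apply Rmult_le_compat_l; [apply Rabs_pos|auto].
Qed.

End BanachBialgebra.

Section ModuleAlgebra.
Variables (H : BBialg) (A : HModAlg H).

Lemma act_linl (a : A) : Defs.linear (fun x => act A x a).
Proof. exact (proj1 (proj1 (act_cbil H A)) a). Qed.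

Lemma act_linr (x : H) : Defs.linear (act A x).
Proof. exact (proj2 (proj1 (act_cbil H A)) x). Qed.

Lemma orbit_bound (a : A) (L0 : list (Defs.idx A)) :
  exists L K, 0 <= K /\ forall x, maxl (sn A) L0 (act A x a) <= K * maxl (sn H) L x.
Proof.
  apply (list_bound (fun i x => sn A i (act A x a)) (fun L x => maxl (sn H) L x)).
  - intros; apply maxl_ge0.
  - intros; apply maxl_appl.
  - intros; apply maxl_appr.
  - intros i. destruct (proj2 (act_cbil H A) i) as [L1 [L2 [K HK]]].
    exists L1, (K * maxl (sn A) L2 a). intros x. eapply Rle_trans; [apply HK|]. right; ring.
Qed.

Section Saturation.
Variable q : A -> R.
Hypothesis q_cont : cont_seminorm A q.

Lemma act_bound :
  exists L K, 0 <= K /\ forall h a, q (act A h a) <= K * (bnorm H h * maxl (sn A) L a).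
Proof.
  destruct q_cont as [Hs [Lq [Kq HKq]]].
  destruct (list_bound (fun i (p : H * A) => sn A i (act A (fst p) (snd p)))
              (fun L (p : H * A) => bnorm H (fst p) * maxl (sn A) L (snd p))) with (L0 := Lq)
    as [L [K [HK1 HK2]]].
  - intros; apply Rmult_le_pos; [apply bnorm_ge0|apply maxl_ge0].
  - intros; apply Rmult_le_compat_l; [apply bnorm_ge0|apply maxl_appl].
  - intros; apply Rmult_le_compat_l; [apply bnorm_ge0|apply maxl_appr].
  - intros i. destruct (proj2 (act_cbil H A) i) as [L1 [L2 [K HK]]].
    destruct (sn_le_bnorm H L1) as [c1 [Hc1 H1]].
    exists L2, (Rabs K * c1 * 1). intros [h a]; simpl.
    eapply Rle_trans; [apply HK|]. apply bilinear_estimate; auto; try lra; apply maxl_ge0.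
  - exists L, (Rabs Kq * K). split; [pose proof (Rabs_pos Kq); nra|]. intros h a.
    eapply Rle_trans; [apply HKq|]. eapply Rle_trans; [apply abs_bound, maxl_ge0|].
    rewrite Rmult_assoc. apply Rmult_le_compat_l; [apply Rabs_pos|]. apply (HK2 (h, a)).
Qed.

Definition unit_ball : Type := {h : H | bnorm H h <= 1}.

Definition qsat (a : A) : R := supf (fun h : unit_ball => q (act A (proj1_sig h) a)).

Lemma unit_ball_act_bound :
  exists L K, 0 <= K /\ forall a (h : unit_ball), q (act A (proj1_sig h) a) <= K * maxl (sn A) L a.
Proof.
  destruct act_bound as [L [K [HK1 HK2]]]. exists L, K. split; auto.
  intros a [h Hh]; simpl. eapply Rle_trans; [apply HK2|]. apply Rmult_le_compat_l; auto.
  pose proof (maxl_ge0 (sn A) L a). pose proof (bnorm_ge0 H h). nra.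
Qed.

Lemma qsat_ge (h : H) (a : A) : bnorm H h <= 1 -> q (act A h a) <= qsat a.
Proof.
  intros Hh. destruct unit_ball_act_bound as [L [K [_ HK]]].
  apply (supf_ge (fun h : unit_ball => q (act A (proj1_sig h) a)) _ (exist _ h Hh) (HK a)).
Qed.

Lemma qsat_ge0 (a : A) : 0 <= qsat a.
Proof.
  destruct unit_ball_act_bound as [L [K [_ HK]]].
  apply (supf_ge0 (fun h : unit_ball => q (act A (proj1_sig h) a)) _ (HK a)).
Qed.

Lemma qsat_le (a : A) (M : R) : 0 <= M ->
  (forall h, bnorm H h <= 1 -> q (act A h a) <= M) -> qsat a <= M.
Proof. intros HM Hball. apply supf_le; auto. intros [h Hh]; simpl; auto. Qed.

Lemma qsat_cont : exists L K, 0 <= K /\ forall a, qsat a <= K * maxl (sn A) L a.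
Proof.
  destruct unit_ball_act_bound as [L [K [HK1 HK]]]. exists L, K. split; auto.
  intros a. apply qsat_le; [apply Rmult_le_pos; auto; apply maxl_ge0|].
  intros h Hh. apply (HK a (exist _ h Hh)).
Qed.

Lemma qsat_semi : is_seminorm A qsat.
Proof.
  pose proof (proj1 q_cont) as Hs. split.
  - intros x y. pose proof (qsat_ge0 x); pose proof (qsat_ge0 y).
    apply qsat_le; [lra|]. intros h Hh. rewrite (proj1 (act_linr h)).
    eapply Rle_trans; [apply Hs|].
    pose proof (qsat_ge h x Hh); pose proof (qsat_ge h y Hh); lra.
  - intros c x. unfold qsat. destruct unit_ball_act_bound as [L [K [_ HK]]].
    rewrite <- (supf_scale _ _ _ (Cmod_ge0 c) (HK x)). f_equal.
    apply functional_extensionality; intros h. rewrite (proj2 (act_linr _)). apply Hs.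
Qed.

Lemma qsat_cont_seminorm : cont_seminorm A qsat.
Proof.
  split; [apply qsat_semi|].
  destruct qsat_cont as [L [K [_ HK]]]. exists L, K. exact HK.
Qed.

(* q(h.a) <= |h| q'(a), by rescaling h into the unit ball. *)
Lemma q_act_le (h : H) (a : A) : q (act A h a) <= bnorm H h * qsat a.
Proof.
  pose proof (proj1 q_cont) as Hs. pose proof (qsat_ge0 a).
  destruct (Req_dec (bnorm H h) 0) as [Hzero|Hnz].
  - apply bnorm_sep in Hzero. subst h. rewrite (linear0 _ (act_linl a)), semi0; auto.
    pose proof (bnorm_ge0 H (vzero H)). nra.
  - set (r := bnorm H h). assert (Hr : 0 < r) by (pose proof (bnorm_ge0 H h); unfold r in *; lra).
    set (h' := vscal (Cr (/ r)) h).
    assert (Hh' : bnorm H h' = 1).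
    { unfold h'. rewrite (semi_real_scal H _ (bnorm_semi H)). fold r.
      rewrite Rabs_pos_eq by (apply Rlt_le, Rinv_0_lt_compat; auto). field; lra. }
    assert (Hhh : h = vscal (Cr r) h').
    { unfold h'. rewrite vscalA, Cmul_r. replace (r * / r) with 1 by (field; lra).
      rewrite <- C1_r, vscal1. auto. }
    rewrite Hhh at 1. rewrite (proj2 (act_linl a)), (semi_real_scal A q Hs).
    rewrite Rabs_pos_eq by lra. apply Rmult_le_compat_l; [lra|]. apply qsat_ge. lra.
Qed.

Lemma q_le_qsat (a : A) : q a <= bnorm H (aone H) * qsat a.
Proof. rewrite <- (act_1 H A a) at 1. apply q_act_le. Qed.

(* q' is H-stable, because the norm of H is submultiplicative up to C. *)
Lemma qsat_stable :
  exists C, 0 <= C /\ forall k a, qsat (act A k a) <= C * bnorm H k * qsat a.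
Proof.
  destruct (bnorm_mul H) as [C [HC HCmul]]. exists C. split; auto. intros k a.
  pose proof (bnorm_ge0 H k). pose proof (qsat_ge0 a).
  apply qsat_le; [apply Rmult_le_pos; auto; nra|].
  intros h Hh. rewrite <- act_mul. eapply Rle_trans; [apply q_act_le|].
  apply Rmult_le_compat_r; auto. eapply Rle_trans; [apply HCmul|].
  assert (0 <= C * bnorm H k) by (apply Rmult_le_pos; auto).
  pose proof (bnorm_ge0 H h). nra.
Qed.

Hypothesis q_sub : submult A q.

Definition ball_pairs : Type := {p : A * A | qsat (fst p) <= 1 /\ qsat (snd p) <= 1}.

Lemma pair_product_le (x y : H) (s : ball_pairs) :
  q (amul (act A x (fst (proj1_sig s))) (act A y (snd (proj1_sig s))))
    <= bnorm H x * bnorm H y.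
Proof.
  destruct s as [[a b] [Ha Hb]]; simpl in *.
  eapply Rle_trans; [apply q_sub|].
  pose proof (q_act_le x a). pose proof (q_act_le y b).
  pose proof (qsat_ge0 a). pose proof (qsat_ge0 b).
  pose proof (bnorm_ge0 H x). pose proof (bnorm_ge0 H y).
  pose proof (semi_ge0 A q (proj1 q_cont) (act A x a)).
  pose proof (semi_ge0 A q (proj1 q_cont) (act A y b)).
  apply Rmult_le_compat; auto; nra.
Qed.

Lemma pair_product_bounded (x y : H) :
  bounded_family A q ball_pairs
    (fun s => amul (act A x (fst (proj1_sig s))) (act A y (snd (proj1_sig s)))).
Proof. exists (bnorm H x * bnorm H y). apply pair_product_le. Qed.

Definition pair_product (x y : H) : Bfam A q ball_pairs (proj1 q_cont) :=
  exist _ _ (pair_product_bounded x y).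

Lemma pair_product_cbil : cont_bilinear pair_product.
Proof.
  split; [split|].
  - intros y; split.
    + intros x x'. apply bfam_eq; intros s; simpl.
      rewrite (proj1 (act_linl _)). apply (proj1 (amul_linl A _)).
    + intros c x. apply bfam_eq; intros s; simpl.
      rewrite (proj2 (act_linl _)). apply (proj2 (amul_linl A _)).
  - intros x; split.
    + intros y y'. apply bfam_eq; intros s; simpl.
      rewrite (proj1 (act_linl _)). apply (proj1 (amul_linr A _)).
    + intros c y. apply bfam_eq; intros s; simpl.
      rewrite (proj2 (act_linl _)). apply (proj2 (amul_linr A _)).
  - intros [[i s]|].
    + destruct (proj2 (amul_cbil A) i) as [L1 [L2 [K HK]]].
      destruct (orbit_bound (fst (proj1_sig s)) L1) as [La [Ka [HKa HKa']]].
      destruct (orbit_bound (snd (proj1_sig s)) L2) as [Lb [Kb [HKb HKb']]].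
      exists La, Lb, (Rabs K * Ka * Kb). intros x y. simpl.
      eapply Rle_trans; [apply HK|].
      replace (Rabs K * Ka * Kb * maxl (sn H) La x * maxl (sn H) Lb y) with
        ((Rabs K * Ka * Kb) * (maxl (sn H) La x * maxl (sn H) Lb y)) by ring.
      apply bilinear_estimate; auto; apply maxl_ge0.
    + destruct (bnorm_cont H) as [Lb [Kb [HKb HbL]]].
      exists Lb, Lb, (Kb * Kb). intros x y. simpl.
      pose proof (maxl_ge0 (sn H) Lb x). pose proof (maxl_ge0 (sn H) Lb y).
      pose proof (bnorm_ge0 H x). pose proof (bnorm_ge0 H y).
      pose proof (HbL x). pose proof (HbL y).
      apply supf_le; [apply Rmult_le_pos; [apply Rmult_le_pos|]; nra|].
      intros s. eapply Rle_trans; [apply pair_product_le|].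
      apply Rle_trans with ((Kb * maxl (sn H) Lb x) * (Kb * maxl (sn H) Lb y)); [|right; ring].
      apply Rmult_le_compat; auto.
Qed.

(* The
   bilinear map pair_product factors through H (^x) H as Psi, and the
   compatibility of the action with multiplication gives
   h.(ab) = Psi(Delta h)_(a,b). *)
Lemma act_product_bound :
  exists K, 0 <= K /\ forall h a b, qsat a <= 1 -> qsat b <= 1 ->
    q (act A h (amul a b)) <= K * bnorm H h.
Proof.
  set (G := Bfam A q ball_pairs (proj1 q_cont)).
  assert (HG : Defs.complete G) by (apply Bfam_complete; [apply acomplete|apply (proj2 q_cont)]).
  destruct (proj2 (proj2 (btens_pt H)) G pair_product HG pair_product_cbil)
    as [[Psi [HPsi HPsi_tens]] _].
  destruct (proj2 HPsi None) as [LP [KP HKP]].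
  destruct (Delta_bounded H LP) as [c [Hc HcDelta]].
  exists (Rabs KP * c). split; [apply Rmult_le_pos; auto; apply Rabs_pos|].
  intros h a b Ha Hb.
  set (s := exist _ (a, b) (conj Ha Hb) : ball_pairs).
  assert (Heval : cont_linear (fun z => proj1_sig (Psi z) s)).
  { split; [split|].
    - intros z z'. rewrite (proj1 (proj1 HPsi)). reflexivity.
    - intros c' z. rewrite (proj2 (proj1 HPsi)). reflexivity.
    - intros j. destruct (proj2 HPsi (Some (j, s))) as [L [K HK]].
      exists L, K. intros z. apply (HK z). }
  rewrite (act_amul H A a b (fun z => proj1_sig (Psi z) s) Heval).
  2:{ intros x y. rewrite HPsi_tens. reflexivity. }
  eapply Rle_trans; [apply (bfam_sup_ge A q ball_pairs (Psi (Defs.Delta H h)) s)|].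
  eapply Rle_trans; [apply (HKP (Defs.Delta H h))|].
  eapply Rle_trans; [apply abs_bound, maxl_ge0|]. rewrite Rmult_assoc.
  apply Rmult_le_compat_l; [apply Rabs_pos|auto].
Qed.

Lemma qsat_submult :
  exists D, 0 <= D /\ forall a b, qsat (amul a b) <= D * qsat a * qsat b.
Proof.
  destruct act_product_bound as [K [HK0 HK]]. exists K. split; auto. intros a b.
  pose proof (qsat_ge0 a). pose proof (qsat_ge0 b).
  apply qsat_le; [apply Rmult_le_pos; [apply Rmult_le_pos|]; auto|].
  intros h Hh.
  apply (unit_ball_bound A qsat (fun a b => q (act A h (amul a b))) K qsat_semi HK0).
  - intros r s a' b' Hr Hs.
    rewrite (proj2 (amul_linl A _)), (proj2 (amul_linr A _)), vscalA, Cmul_r.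
    rewrite (proj2 (act_linr h)), (semi_real_scal A q (proj1 q_cont)).
    rewrite Rabs_pos_eq by nra. reflexivity.
  - intros a' b' Ha' Hb'. eapply Rle_trans; [apply HK; auto|].
    pose proof (bnorm_ge0 H h). nra.
Qed.

Lemma localizing_seminorm :
  exists r : A -> R, cont_seminorm A r /\ submult A r /\ H_stable H A r /\
    forall a, q a <= r a.
Proof.
  destruct qsat_submult as [D0 [HD0 Hsub]].
  set (D := Rmax D0 (Rmax 1 (bnorm H (aone H)))).
  assert (HD0D : D0 <= D) by apply Rmax_l.
  assert (H1D : 1 <= D) by (eapply Rle_trans; [apply Rmax_l|apply Rmax_r]).
  assert (HoneD : bnorm H (aone H) <= D) by (eapply Rle_trans; [apply Rmax_r|apply Rmax_r]).
  exists (fun a => D * qsat a). split; [|split; [|split]].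
  - apply scale_cont_seminorm, qsat_cont_seminorm. lra.
  - intros a b. pose proof (Hsub a b). pose proof (qsat_ge0 a). pose proof (qsat_ge0 b).
    assert (D0 * qsat a * qsat b <= D * qsat a * qsat b) by (apply Rmult_le_compat_r; nra).
    nra.
  - destruct qsat_stable as [C [HC HCst]].
    exists (fun k => C * bnorm H k). split.
    + apply scale_cont_seminorm, (proj1 (bnorm_def H) tt). auto.
    + intros k a. pose proof (HCst k a).
      apply Rle_trans with (D * (C * bnorm H k * qsat a)); [apply Rmult_le_compat_l; lra|].
      right; ring.
  - intros a. eapply Rle_trans; [apply q_le_qsat|].
    apply Rmult_le_compat_r; [apply qsat_ge0|auto].
Qed.

End Saturation.
End ModuleAlgebra.

Theorem proposition5p11 (H : BBialg) (A : HModAlg H) :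
  ArensMichael A ->
  exists (J : Type) (q : J -> A -> R),
    defining_family A J q /\
    forall j, submult A (q j) /\ H_stable H A (q j).
Proof.
  intros [J [qf [[Hcont Hdef] Hsub]]].
  set (good := fun j (r : A -> R) => cont_seminorm A r /\ submult A r /\
                 H_stable H A r /\ forall a, qf j a <= r a).
  set (r := fun j => epsilon (inhabits (qf j)) (good j)).
  assert (Hr : forall j, good j (r j))
    by (intros j; apply epsilon_spec, localizing_seminorm; auto).
  exists J, r. split; [split|].
  - intros j. apply Hr.
  - intros i. destruct (Hdef i) as [L [K HK]]. exists L, (Rabs K). intros x.
    eapply Rle_trans; [apply HK|]. eapply Rle_trans; [apply abs_bound, maxl_ge0|].
    apply Rmult_le_compat_l; [apply Rabs_pos|].
    apply maxl_mono. intros j. apply Hr.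
  - intros j. destruct (Hr j) as [_ [Hm [Hst _]]]. auto.
Qed.
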